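(* Let $\Gamma$ be a 3-colex and $E=\prod_{\nu\in\Omega}X_\nu$ an $X$-type error on the 3D color code on $\Gamma$. Suppose that for each color $c\in\{r,b,g,y\}$, $\mathsf F_c$ is a set of faces of $\Gamma^{*\setminus c}$ such that $\prod_{f\in\mathsf F_c}X_f=\pi_c(E)\,S_c$ for some $X$-stabilizer $S_c$ of the 3D toric code on $\Gamma^{*\setminus c}$ (i.e. $\pi_c(E)$ is estimated up to a stabilizer on $\Gamma^{*\setminus c}$). Then $\mathsf F=\bigcup_c\mathsf F_c$ equals $\partial(E S)$ for some $X$-stabilizer $S$ of the color code; that is, $\mathsf F$ is an estimate of $\partial E$ up to the boundary of an $X$-stabilizer of the color code.
   Context: Colors are $\{r,b,g,y\}$. A 3-colex $\Gamma$ is a 3-dimensional cell complex without boundary in which every vertex is 4-valent and lies in exactly four 3-cells, and whose 3-cells are properly 4-colored: every face lies in exactly two 3-cells, which have different colors. The dual complex $\Gamma^*$ has an $i$-cell for every $(3-i)$-cell of $\Gamma$, with incidences reversed; every 3-cell of $\Gamma^*$ is a tetrahedron. A vertex of $\Gamma^*$ is given the color of the corresponding 3-cell of $\Gamma$, so the four vertices of each tetrahedron have distinct colors. A face of $\Gamma^*$ is a $c$-face if none of its vertices has color $c$; each tetrahedron $\nu$ has a unique $c$-face $\pi_c(\nu)$. The 3D color code on $\Gamma$ has one qubit per tetrahedron of $\Gamma^*$, $X$-stabilizer generators $B^X_v=\prod_{\nu\ni v}X_\nu$ for vertices $v$ of $\Gamma^*$, and $Z$-stabilizer generators $B^Z_e=\prod_{\nu\supset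 e}Z_\nu$ for edges $e$; $X$-stabilizers are products of the $B^X_v$. The minor complex $\Gamma^{*\setminus c}$ is obtained from $\Gamma^*$ by deleting all vertices of color $c$ together with all edges and faces incident to them; its faces are the $c$-faces of $\Gamma^*$, and its 3-cells are obtained by merging, for each $c$-vertex $v$, all tetrahedra containing $v$ into one 3-cell. The 3D toric code on $\Gamma^{*\setminus c}$ has qubits on faces and $X$-stabilizer generators $\prod_{f\in\partial\mu}X_f$ for 3-cells $\mu$; its $X$-stabilizers are products of these. Operators are mapped by $\pi_c(\prod_{\nu\in\Omega}X_\nu)=\prod_{\nu\in\Omega}X_{\pi_c(\nu)}$ (with $X_f^2=I$). For an $X$-operator $E=\prod_{\nu\in\Omega}X_\nu$ on the color code, its boundary is $\partial E=\sum_{\nu\in\Omega}\partial\nu$, where $\partial\nu$ is the set of four faces of $\nu$ and the sum is the mod-2 sum (symmetric difference) of sets of faces. *)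

(* Combinatorial model of the dual complex Gamma^* of a 3-colex.
   Colors r,b,g,y are encoded as 'I_4 = {0,1,2,3}. *)
From mathcomp Require Import all_boot.
Set Implicit Arguments. Unset Strict Implicit. Unset Printing Implicit Defensive.

Notation color := 'I_4.

Definition sum2 (I X : finType) (A : {set I}) (G : I -> {set X}) : {set X} :=
  [set x | odd #|[set i in A | x \in G i]|].

(* product of two X-operators = symmetric difference of their supports *)
Definition symdiff (X : finType) (A B : {set X}) : {set X} := (A :|: B) :\: (A :&: B).

Section DualColex.
Variables (V T F : finType).
(* col v    : color of vertex v of Gamma^*
   tv nu c  : the (unique) vertex of color c of the tetrahedron nu
   tf nu c  : the c-face pi_c(nu) of the tetrahedron nu
   fv f     : vertex set of the face f *)
Variables (col : V -> color) (tv : T -> color -> V) (tf : T -> color -> F)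
          (fv : F -> {set V}).

Definition is_dual_colex : Prop :=
  [/\ (forall nu c, col (tv nu c) = c),
      (forall nu c, fv (tf nu c) = [set tv nu c' | c' in [set c' : color | c' != c]]) &
      (forall f, #|[set nu | [exists c, tf nu c == f]]| = 2)].

Definition tet_vert (nu : T) (v : V) : bool := [exists c, tv nu c == v].

Definition cface (c : color) (f : F) : bool := [forall v in fv f, col v != c].

Definition bnd (Om : {set T}) : {set F} := sum2 Om (fun nu => [set tf nu c | c : color]).

Definition cc_stab (W : {set V}) : {set T} := sum2 W (fun v => [set nu | tet_vert nu v]).

Definition pic (c : color) (Om : {set T}) : {set F} := sum2 Om (fun nu => [set tf nu c]).

(* boundary of the 3-cell of Gamma^{*\c} obtained by merging the tetrahedra around the c-vertex v *)
Definition toric_cell (c : color) (v : V) : {set F} := pic c [set nu | tet_vert nu v].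

Definition toric_stab (c : color) (W : {set V}) : {set F} := sum2 W (toric_cell c).
End DualColex.

(** Every face of Gamma^* has a well-defined color: it is the c-face of each
    tetrahedron containing it, for one and the same c.  Hence the boundary of
    any X-operator splits as the disjoint union of its projections pi_c.  Each
    pi_c is linear over GF(2); it sends the color-code stabilizer of a c-vertex
    to the toric-code stabilizer of the corresponding 3-cell of Gamma^{*\c},
    and kills the stabilizer of a vertex v of another color, because the
    tetrahedra around v whose c-face is f are either none or the two
    tetrahedra containing f.  So with S generated by the union of the vertex
    sets W_c, the c-part of the boundary of E S is pi_c(E) S_c = F_c. *)
From mathcomp Require Import all_boot.

Set Implicit Arguments.
Unset Strict Implicit.
Unset Printing Implicit Defensive.

Lemma in_symdiff (X : finType) (A B : {set X}) x :
  (x \in symdiff A B) = (x \in A) (+) (x \in B).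
Proof. by rewrite !inE; case: (x \in A); case: (x \in B). Qed.

Section Sum2.
Variables I X : finType.
Implicit Types (A B : {set I}) (G : I -> {set X}).

Lemma in_sum2 A G x :
  (x \in sum2 A G) = \big[addb/false]_(i in A) (x \in G i).
Proof.
rewrite inE -sum1_card (big_morph odd oddD erefl) [RHS]big_mkcond [LHS]big_mkcond /=.
by apply: eq_bigr => i _; rewrite inE; case: (i \in A); case: (x \in G i).
Qed.

Lemma sum2_symdiff A B G :
  sum2 (symdiff A B) G = symdiff (sum2 A G) (sum2 B G).
Proof.
apply/setP => x; rewrite in_symdiff !in_sum2 !(big_mkcond (fun i => i \in _)) -big_split /=.
apply: eq_bigr => i _; rewrite in_symdiff.
by case: (i \in A); case: (i \in B); case: (x \in G i).
Qed.

Lemma sum2_setI_supp A B G :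
  (forall i, i \notin B -> G i = set0) -> sum2 A G = sum2 (A :&: B) G.
Proof.
move=> G0; apply/setP => x; rewrite !in_sum2 !(big_mkcond (fun i => i \in _)).
apply: eq_bigr => i _; rewrite inE; case: (i \in A) => //=.
by case: (boolP (i \in B)) => // /G0 ->; rewrite inE.
Qed.

End Sum2.

Lemma sum2_sum2 (I J X : finType) (W : {set J}) (H : J -> {set I}) (G : I -> {set X}) :
  sum2 (sum2 W H) G = sum2 W (fun w => sum2 (H w) G).
Proof.
apply/setP => x; rewrite !in_sum2 big_mkcond /=.
under eq_bigr => i _ do rewrite -[if _ then _ else _]/(_ && _) in_sum2 big_distrl /=.
rewrite exchange_big /=; apply: eq_bigr => w _.
by rewrite in_sum2 [RHS]big_mkcond.
Qed.

Lemma bigcup_fibers_setI (I X : finType) (p : X -> I) (A : I -> {set X}) j :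
  (forall i, A i \subset [set x | p x == i]) ->
  (\bigcup_i A i) :&: [set x | p x == j] = A j.
Proof.
move=> Ap; apply/setP => x; rewrite !inE.
apply/andP/idP => [[/bigcupP [i _ xAi] /eqP <-] | xAj].
  by have := subsetP (Ap i) x xAi; rewrite inE => /eqP ->.
by split; [apply/bigcupP; exists j | have := subsetP (Ap j) x xAj; rewrite inE].
Qed.

Section DualColexFacts.
Variables (V T F : finType) (col : V -> color) (tv : T -> color -> V)
  (tf : T -> color -> F) (fv : F -> {set V}).
Hypothesis colex : is_dual_colex col tv tf fv.

Let col_tv nu c : col (tv nu c) = c.
Proof. by case: colex. Qed.

Let card_cofaces f : #|[set nu | [exists c, tf nu c == f]]| = 2.
Proof. by case: colex. Qed.

Lemma mem_fv_tf nu c v :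
  (v \in fv (tf nu c)) = tet_vert tv nu v && (col v != c).
Proof.
case: colex => _ -> _; apply/imsetP/andP => [[c' c'c ->] | [/existsP [c' /eqP <-]]].
  by rewrite col_tv; move: c'c; rewrite inE; split => //; apply/existsP; exists c'.
by rewrite col_tv => c'c; exists c'; rewrite ?inE.
Qed.

Lemma tf_color_inj nu nu' c c' : tf nu c = tf nu' c' -> c = c'.
Proof.
move=> eq_f; apply/eqP; apply: contraT => cc'.
have : tv nu c' \in fv (tf nu c).
  by rewrite mem_fv_tf col_tv eq_sym cc' andbT; apply/existsP; exists c'.
by rewrite eq_f mem_fv_tf col_tv eqxx andbF.
Qed.

Lemma tf_surj f : exists nu c, tf nu c = f.
Proof.
have : 0 < #|[set nu | [exists c, tf nu c == f]]| by rewrite card_cofaces.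
by case/card_gt0P => nu; rewrite inE => /existsP [c /eqP <-]; exists nu, c.
Qed.

Lemma mem_pic c Om f : (f \in pic tf c Om) = \big[addb/false]_(nu in Om) (tf nu c == f).
Proof. by rewrite in_sum2; apply: eq_bigr => nu _; rewrite inE eq_sym. Qed.

Lemma bnd_bigcup_pic Om : bnd tf Om = \bigcup_c pic tf c Om.
Proof.
apply/setP => f; have [nu0 [c0 <-]] := tf_surj f.
have faces_tf nu : (tf nu0 c0 \in [set tf nu c | c : color]) = (tf nu c0 == tf nu0 c0).
  apply/imsetP/eqP => [[c _ eq_f] | <-]; last by exists c0.
  by rewrite eq_f (tf_color_inj eq_f).
rewrite in_sum2; under eq_bigr do rewrite faces_tf; rewrite -mem_pic.
apply/idP/bigcupP => [|[c _]]; first by exists c0.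
rewrite mem_pic; case: (eqVneq c c0) => [-> | cc0]; first by rewrite mem_pic.
by rewrite big1 // => nu _; apply/eqP => /tf_color_inj /eqP; rewrite (negPf cc0).
Qed.

(* If f is a c-face, the tetrahedra around v with c-face f are the two
   tetrahedra containing f when v lies on f, and none otherwise. *)
Lemma toric_cell_off_color c v : col v != c -> toric_cell tv tf c v = set0.
Proof.
move=> vc; apply/setP => f; rewrite in_set0 inE.
have [/existsP [nu0 /eqP f_c] | no_c] := boolP [exists nu, tf nu c == f]; last first.
  rewrite (_ : [set _ in _ | _] = set0) ?cards0 //; apply/setP => nu.
  by rewrite !inE; apply/andP => [[_ /eqP f_nu]]; case/existsP: no_c; exists nu; rewrite f_nu.
suff -> : [set nu in [set nu | tet_vert tv nu v] | f \in [set tf nu c]] =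
          if v \in fv f then [set nu | [exists c', tf nu c' == f]] else set0.
  by case: ifP; rewrite ?card_cofaces ?cards0.
apply/setP => nu; rewrite !inE; case: ifP => [vf | vNf]; rewrite ?inE.
  apply/idP/existsP => [/andP [_ /eqP ->] | [c' /eqP f_nu]]; first by exists c.
  have c'c := tf_color_inj (etrans f_nu (esym f_c)); subst c'.
  by move: vf; rewrite -f_nu mem_fv_tf vc eqxx !andbT.
by apply/andP => [[vnu /eqP f_nu]]; move: vNf; rewrite f_nu mem_fv_tf vnu vc.
Qed.

Lemma pic_symdiff c A B : pic tf c (symdiff A B) = symdiff (pic tf c A) (pic tf c B).
Proof. exact: sum2_symdiff. Qed.

Lemma pic_cc_stab c W :
  pic tf c (cc_stab tv W) = toric_stab tv tf c (W :&: [set v | col v == c]).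
Proof.
rewrite /pic /cc_stab sum2_sum2; apply: sum2_setI_supp => v.
by rewrite inE; apply: toric_cell_off_color.
Qed.

End DualColexFacts.

Theorem theorem2 (V T F : finType) (col : V -> color) (tv : T -> color -> V)
    (tf : T -> color -> F) (fv : F -> {set V})
    (Hcolex : is_dual_colex col tv tf fv)
    (Om : {set T}) (Fc : color -> {set F}) :
  (forall c, Fc c \subset [set f | cface col fv c f]) ->
  (forall c, exists Wc : {set V},
      Wc \subset [set v | col v == c] /\
      Fc c = symdiff (pic tf c Om) (toric_stab tv tf c Wc)) ->
  exists W : {set V}, \bigcup_(c : color) Fc c = bnd tf (symdiff Om (cc_stab tv W)).
Proof.
move=> _ estimates; have [Wc HWc] := fin_all_exists estimates.
exists (\bigcup_c Wc c); rewrite (bnd_bigcup_pic Hcolex).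
apply: eq_bigr => c _; rewrite pic_symdiff (pic_cc_stab Hcolex) bigcup_fibers_setI; first by case: (HWc c).
by move=> c'; case: (HWc c').
Qed.
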